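(* Let $n>2$ and $k\ge 2n-1$ be integers. Suppose that $A$ is a set of $k$ integers satisfying $$|S_n(A)|=(k-1)n-3\binom n2+1=kn-\tfrac 32 n^2+\tfrac n2+1.$$ Then $A$ contains at least $n-1$ negative integers and also at least $n-1$ positive integers.
   Context: For a finite set $A\subseteq\mathbb Z$ and a positive integer $n$, define $$S_n(A)=\{a_1+\cdots+a_n:\ a_1,\ldots,a_n\in A,\ \text{and}\ a_i^2\neq a_j^2\ \text{for}\ 1\le i<j\le n\}.$$ *)

From HB Require Import structures.
From mathcomp Require Import all_boot all_order all_algebra.
From mathcomp Require Import finmap.
Set Implicit Arguments. Unset Strict Implicit. Unset Printing Implicit Defensive.
Import Order.TTheory GRing.Theory Num.Theory.
Local Open Scope fset_scope.

Definition sq_distinct (n : nat) (A : {fset int}) (f : {ffun 'I_n -> A}) : bool :=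
  [forall i : 'I_n, forall j : 'I_n,
     (i < j)%N ==> ((fsval (f i) ^+ 2)%R != (fsval (f j) ^+ 2)%R)].

Definition Sn (n : nat) (A : {fset int}) : {fset int} :=
  [fset (fun f : {ffun 'I_n -> A} => \sum_(i < n) fsval (f i))%R f
     | f in [pred f : {ffun 'I_n -> A} | sq_distinct f]].

(* Write c for the number of x > 0 with both x and -x in A.  Whenever S_n(A) is
   nonempty and c <= n,
     |S_n(A)| >= n (|A| - n - c) + c (c + 1) / 2 + 1,
   by induction on |A|.  If the maximum w of A has -w outside A, replacing one term
   of a maximal sum of S_n(A \ w) by w gives n sums exceeding all of S_n(A \ w);
   symmetrically for the minimum, and if the extremes are w and -w, removing both
   loses at least 2n sums.  When no admissible n-set avoids {z, -z}, every
   admissible set meets every pair {y, -y} of A; removing -v, for the largest v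
   counted by c, then loses at least c sums, obtained from a minimal sum by sign
   flips.  For c <= n - 2 the bound exceeds (k - 1) n - 3 C(n, 2) + 1, hence
   c >= n - 1, and the pairs counted by c supply the negative and positive
   elements. *)

From HB Require Import structures.
From mathcomp Require Import all_boot all_order all_algebra.
From mathcomp Require Import finmap zify.
Import Order.TTheory GRing.Theory Num.Theory.
Set Implicit Arguments. Unset Strict Implicit. Unset Printing Implicit Defensive.
Local Open Scope fset_scope.
Local Open Scope ring_scope.

Definition opp_free (B : {fset int}) : Prop :=
  {in B &, forall x y, x + y = 0 -> x = y}.

Definition fsum (B : {fset int}) : int := \sum_(b <- B) b.

(* Distinct squares forbid both repeated terms and opposite terms, so S_n(A) is
   the set of sums of admissible sets (mem_Sn_fsum, Sn_admissible). *)
Definition admissible (n : nat) (A B : {fset int}) : Prop :=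
  [/\ B `<=` A, #|` B| = n & opp_free B].

Lemma mem_Sn_fsum n (A B : {fset int}) : admissible n A B -> fsum B \in Sn n A.
Proof.
case=> sBA cB oB; set s := enum_fset B.
have size_s : size s = n := cB.
have s_in_A (i : 'I_n) : nth 0 s i \in A.
  by apply/(fsubsetP sBA)/mem_nth; rewrite size_s.
apply/imfsetP; exists [ffun i => [` s_in_A i]]; last first.
  by rewrite /fsum (big_nth 0) -/s size_s big_mkord; apply: eq_bigr => i _; rewrite ffunE.
apply/forallP => i; apply/forallP => j; apply/implyP => lt_ij.
have s_i_in_B (l : 'I_n) : nth 0 s l \in B by apply: mem_nth; rewrite size_s.
have neq_ij : nth 0 s i != nth 0 s j.
  by rewrite nth_uniq ?fset_uniq ?size_s // neq_ltn lt_ij.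
rewrite !ffunE /= eqf_sqr negb_or neq_ij /=.
apply: contra neq_ij => /eqP opp_ij; apply/eqP/oB => //.
by rewrite opp_ij addNr.
Qed.

Lemma Sn_admissible n (A : {fset int}) (x : int) :
  x \in Sn n A -> exists2 B, admissible n A B & x = fsum B.
Proof.
case/imfsetP => /= f /forallP sqd ->.
have sq_inj i j : fsval (f i) ^+ 2 = fsval (f j) ^+ 2 -> i = j.
  have sq_neq (l m : 'I_n) : (l < m)%N -> fsval (f l) ^+ 2 != fsval (f m) ^+ 2.
    by move=> lt_lm; apply: (implyP (forallP (sqd l) m)).
  move=> eq_sq; case: (ltngtP i j) => [lt_ij|lt_ji|/val_inj //].
  - by have := sq_neq _ _ lt_ij; rewrite eq_sq eqxx.
  - by have := sq_neq _ _ lt_ji; rewrite eq_sq eqxx.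
set s := [seq fsval (f i) | i <- enum 'I_n].
have us : uniq s.
  by rewrite map_inj_uniq ?enum_uniq // => i j /(congr1 (fun x => x ^+ 2)) /sq_inj.
exists (seq_fset tt s); last first.
  by rewrite /fsum (perm_big _ (seq_fset_perm _ _)) undup_id // big_map big_enum.
split.
- by apply/fsubsetP => y; rewrite seq_fsetE => /mapP [i _ ->]; apply: fsvalP.
- by rewrite size_seq_fset undup_id // size_map size_enum_ord.
- move=> y z; rewrite !seq_fsetE => /mapP [i _ ->] /mapP [j _ ->] /eqP.
  by rewrite addr_eq0 => /eqP eq_ij; rewrite (sq_inj i j) // eq_ij sqrrN.
Qed.

Lemma SnS n (A A' : {fset int}) : A' `<=` A -> Sn n A' `<=` Sn n A.
Proof.
move=> sA'A; apply/fsubsetP => _ /Sn_admissible [B [sBA' cB oB] ->].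
by apply: mem_Sn_fsum; split=> //; apply: fsubset_trans sA'A.
Qed.

Lemma admissible_exchange n (A A' B : {fset int}) (z y : int) :
  admissible n A B -> z \in B -> B `\ z `<=` A' -> y \in A' -> y \notin B ->
  - y \notin B `\ z -> admissible n A' (y |` (B `\ z)).
Proof.
case=> _ cB oB zB sBA' yA' yB nyB; split.
- by rewrite fsubUset fsub1set yA'.
- by rewrite cardfsU1 !inE negb_and yB orbT -cB (cardfsD1 z B) zB.
- have opp_notin b : b \in B `\ z -> y + b = 0 -> False.
    by move=> bB /eqP; rewrite addr_eq0 => /eqP eq_y; rewrite eq_y opprK bB in nyB.
  move=> a b /fset1UP [-> | aB] /fset1UP [-> | bB] ab0 //.
  + by case: (opp_notin b).
  + by case: (opp_notin a); rewrite // addrC.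
  + by move/fsetD1P: aB => [_ aB]; move/fsetD1P: bB => [_ bB]; apply: oB.
Qed.

Lemma fsum_exchange (B : {fset int}) (z y : int) :
  z \in B -> y \notin B -> fsum (y |` (B `\ z)) = fsum B - z + y.
Proof.
move=> zB yB; rewrite /fsum big_fsetU1 ?inE ?negb_and ?yB ?orbT //=.
by rewrite (big_fsetD1 z zB) /=; lia.
Qed.

Lemma mem_Sn_exchange n (A A' B : {fset int}) (z y : int) :
  admissible n A B -> z \in B -> B `\ z `<=` A' -> y \in A' -> y \notin B ->
  - y \notin B `\ z -> fsum B - z + y \in Sn n A'.
Proof.
move=> aB zB sBA' yA' yB nyB; rewrite -fsum_exchange //.
apply: mem_Sn_fsum; exact: (admissible_exchange aB zB sBA' yA' yB nyB).
Qed.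

Lemma fset_argmax (T : choiceType) d (R : orderType d) (X : {fset T}) (F : T -> R) :
  X != fset0 -> exists2 s, s \in X & forall x, x \in X -> (F x <= F s)%O.
Proof.
case/fset0Pn => x0 x0X.
case: (@arg_maxP _ _ _ [` x0X] xpredT (fun i : X => F (val i)) isT) => /= i _ imax.
by exists (val i) => [|x xX]; [apply: valP | apply: (imax [` xX])].
Qed.

Lemma leq_card_disjoint (T : choiceType) (X N Y : {fset T}) :
  X `<=` Y -> N `<=` Y -> [disjoint X & N] -> (#|` X| + #|` N| <= #|` Y|)%N.
Proof.
move=> sXY sNY dXN; have := (leq_card_fsetU X N).2; rewrite dXN => /eqP <-.
by apply: fsubset_leq_card; rewrite fsubUset sXY sNY.
Qed.

Lemma disjoint_beyond (e : int) (S N : {fset int}) :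
  (forall x y, x \in N -> y \in S -> e * y < e * x) -> [disjoint S & N].
Proof.
move=> N_beyond; apply/fdisjointP => y yS; apply/negP => yN.
by have := N_beyond _ _ yN yS; rewrite ltxx.
Qed.

(* The sign e selects the maximum (e = 1) or the minimum (e = -1). *)
Lemma Sn_fsetU1_beyond n (e : int) (A : {fset int}) (w : int) :
  w \notin A -> - w \notin A -> (forall b, b \in A -> e * b < e * w) ->
  Sn n A != fset0 ->
  exists N : {fset int}, [/\ #|` N| = n, N `<=` Sn n (w |` A) &
    forall x y, x \in N -> y \in Sn n A -> e * y < e * x].
Proof.
move=> wA nwA w_max SnA_neq0.
have [_ /Sn_admissible [B aB ->] B_max] := fset_argmax (fun x => e * x) SnA_neq0.
have [sBA cB _] := aB.
exists ((fun b => fsum B - b + w) @` B); split.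
- by rewrite card_imfset -?cB // => a b /=; lia.
- apply/fsubsetP => _ /imfsetP [b /= bB ->].
  apply: (mem_Sn_exchange aB bB); rewrite ?fset1U1 //.
  + exact: fsubset_trans (fsubsetDl _ _) (fsubset_trans sBA (fsubsetU1 _ _)).
  + by apply: contra wA; apply: (fsubsetP sBA).
  + by apply: contra nwA => /fsetD1P [_ /(fsubsetP sBA)].
- move=> _ y /imfsetP [b /= bB ->] /B_max le_y.
  have := w_max b (fsubsetP sBA b bB); rewrite mulrDr mulrBr; lia.
Qed.

Lemma card_Sn_fsetD1_extreme n (e : int) (A : {fset int}) (z : int) :
  z \in A -> - z \notin A `\ z -> (forall b, b \in A `\ z -> e * b < e * z) ->
  Sn n (A `\ z) != fset0 -> (#|` Sn n (A `\ z)| + n <= #|` Sn n A|)%N.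
Proof.
move=> zA nzA z_max SnA_neq0.
have zA' : z \notin A `\ z by rewrite fsetD11.
have [N [<- sN N_beyond]] := Sn_fsetU1_beyond zA' nzA z_max SnA_neq0.
apply: leq_card_disjoint; first exact/SnS/fsubsetDl.
  by rewrite fsetD1K in sN.
exact: disjoint_beyond N_beyond.
Qed.

Lemma card_Sn_fsetD2_extreme n (A : {fset int}) (w : int) :
  w \in A -> - w \in A -> (forall b, b \in A `\ w `\ - w -> - w < b < w) ->
  Sn n (A `\ w `\ - w) != fset0 ->
  (#|` Sn n (A `\ w `\ - w)| + 2 * n <= #|` Sn n A|)%N.
Proof.
move=> wA nwA w_max SnA_neq0; set A2 := A `\ w `\ - w.
have wA2 : w \notin A2 by rewrite !inE eqxx andbF.
have nwA2 : - w \notin A2 by rewrite !inE eqxx.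
have sA2 x : x \in A -> x |` A2 `<=` A.
  by move=> xA; apply/fsubsetP => t /fset1UP [-> // | /fsetD1P [_ /fsetD1P []]].
have w_ub b : b \in A2 -> 1 * b < 1 * w.
  by move/w_max/andP => [_]; rewrite !mul1r.
have nw_lb b : b \in A2 -> -1 * b < -1 * - w.
  by move/w_max/andP => [lt_b _]; rewrite !mulN1r ltrN2.
have nnwA2 : - - w \notin A2 by rewrite opprK.
have [N1 [cN1 sN1 N1_beyond]] := Sn_fsetU1_beyond wA2 nwA2 w_ub SnA_neq0.
have [N2 [cN2 sN2 N2_beyond]] := Sn_fsetU1_beyond nwA2 nnwA2 nw_lb SnA_neq0.
have disj1 : [disjoint Sn n A2 & N1] := disjoint_beyond N1_beyond.
have disj2 : [disjoint Sn n A2 `|` N1 & N2].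
  have [y0 y0S] := fset0Pn _ SnA_neq0.
  rewrite fdisjointUX (disjoint_beyond N2_beyond) /=.
  apply/fdisjointP => x xN1; apply/negP => xN2.
  have := N1_beyond _ _ xN1 y0S; have := N2_beyond _ _ xN2 y0S.
  by rewrite !mul1r !mulN1r ltrN2 => /lt_trans lt_xx /lt_xx; rewrite ltxx.
have le1 := leq_card_disjoint (fsubsetUl _ _) (fsubsetUr _ _) disj1.
have le2 : (#|` Sn n A2 `|` N1| + #|` N2| <= #|` Sn n A|)%N.
  apply: leq_card_disjoint disj2; last exact: fsubset_trans sN2 (SnS n (sA2 _ nwA)).
  rewrite fsubUset (fsubset_trans sN1 (SnS n (sA2 _ wA))) andbT.
  exact/SnS/fsubset_trans/(sA2 _ wA)/fsubsetU1.
rewrite cN1 in le1; rewrite cN2 in le2.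
by rewrite mul2n -addnn addnA (leq_trans _ le2) // leq_add2r.
Qed.

Definition sym_pos (A : {fset int}) : {fset int} :=
  [fset x in A | (0 < x) && (- x \in A)].

Lemma sym_posP (A : {fset int}) (x : int) :
  reflect [/\ x \in A, 0 < x & - x \in A] (x \in sym_pos A).
Proof. by rewrite !inE /=; apply: and3P. Qed.

Lemma sym_posS (A A' : {fset int}) : A' `<=` A -> sym_pos A' `<=` sym_pos A.
Proof.
move=> sA'A; apply/fsubsetP => x /sym_posP [xA' x_gt0 nxA'].
by apply/sym_posP; split; rewrite ?(fsubsetP sA'A).
Qed.

Lemma admissible_meets_pairs n (A C : {fset int}) (z : int) :
  Sn n (A `\ z `\ - z) = fset0 -> admissible n A C ->
  forall y, y \in A -> y \in C \/ - y \in C.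
Proof.
wlog zC : z / z \in C => [wlog_z SnA_eq0 aC | SnA_eq0 aC y yA].
  have [sCA cC oC] := aC.
  have [zC | nzC] := boolP (z \in C); first exact: wlog_z zC SnA_eq0 aC.
  have [nzC' | nzC'] := boolP (- z \in C).
    by apply: (wlog_z (- z)) => //; rewrite opprK fsetDDl fsetUC -fsetDDl.
  have : fsum C \in Sn n (A `\ z `\ - z).
    apply: mem_Sn_fsum; split => //; apply/fsubsetP => t tC.
    rewrite !inE (fsubsetP sCA t tC) andbT; apply/andP; split.
    - by apply: contraNneq nzC' => <-.
    - by apply: contraNneq nzC => <-.
  by rewrite SnA_eq0 inE.
have [sCA cC oC] := aC.
have [|yC] := boolP (y \in C); first by left.
have [|nyC] := boolP (- y \in C); first by right.
(* Otherwise exchanging z for y would avoid both z and - z. *)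
have : fsum C - z + y \in Sn n (A `\ z `\ - z).
  apply: (mem_Sn_exchange aC zC) => //.
  - apply/fsubsetP => t /fsetD1P [tz tC]; rewrite !inE (fsubsetP sCA t tC) tz !andbT.
    apply/eqP => t_nz; move/eqP: tz; apply; apply: oC => //.
    by rewrite t_nz addNr.
  - rewrite !inE yA andbT; apply/andP; split.
    + by apply: contraNneq nyC => ->; rewrite opprK.
    + by apply: contraNneq yC => ->.
  - by rewrite inE negb_and nyC orbT.
by rewrite SnA_eq0 inE.
Qed.

Lemma Sn_fsetD1_opp_neq0 n (A : {fset int}) (x : int) :
  x \in A -> x != 0 -> Sn n A != fset0 -> Sn n (A `\ - x) != fset0.
Proof.
move=> xA x_neq0 /fset0Pn [_ /Sn_admissible [B aB _]]; have [sBA cB oB] := aB.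
apply/fset0Pn; have [nxB | nxB] := boolP (- x \in B).
- have xB : x \notin B.
    by apply: contra x_neq0 => xB; move/eqP: (oB _ _ xB nxB (addrN x)); rewrite eq_sym eqNr.
  exists (fsum B - - x + x); apply: (mem_Sn_exchange aB nxB) => //.
  + exact: fsetSD.
  + by rewrite !inE xA andbT eq_sym eqNr.
  + by rewrite fsetD11.
- exists (fsum B); apply: mem_Sn_fsum; split => //.
  apply/fsubsetP => t tB; rewrite !inE (fsubsetP sBA t tB) andbT.
  by apply: contraNneq nxB => <-.
Qed.

Lemma admissible_min_opp_le0 n (A C : {fset int}) (x : int) :
  admissible n A C -> (forall y, y \in Sn n A -> fsum C <= y) ->
  x \in C -> - x \in A -> - x \notin C -> x <= 0.
Proof.
move=> aC C_min xC nxA nxC; have [sCA _ _] := aC.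
suff : fsum C <= fsum C - x + - x by lia.
apply/C_min/(mem_Sn_exchange aC xC) => //.
- exact: fsubset_trans (fsubsetDl _ _) sCA.
- by rewrite opprK fsetD11.
Qed.

Lemma mem_Sn_double_exchange n (A C : {fset int}) (v x : int) :
  admissible n A C -> v \in C -> - v \in A -> - v \notin C -> 0 < v ->
  (forall y, y \in sym_pos A -> y != v -> - y \in C) ->
  x \in 0 |` (sym_pos A `\ v) -> fsum C - 2 * v + 2 * x \in Sn n A.
Proof.
move=> aC vC nvA nvC v_gt0 negC; have [sCA _ oC] := aC.
pose C0 := - v |` (C `\ v).
have aC0 : admissible n A C0.
  apply: (admissible_exchange aC vC) => //; first exact: fsubset_trans (fsubsetDl _ _) sCA.
  by rewrite opprK fsetD11.
have sumC0 : fsum C0 = fsum C - 2 * v by rewrite fsum_exchange //; lia.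
case/fset1UP => [-> | /fsetD1P [xv xD]].
  by rewrite mulr0 addr0 -sumC0; apply: mem_Sn_fsum.
have [xA x_gt0 nxA] := sym_posP _ _ xD.
have nxC0 : - x \in C0 by apply/fset1UP; right; apply/fsetD1P; split; [lia | apply: negC].
have xC0 : x \notin C0.
  apply/fset1UP => [[x_eq | /fsetD1P [_ xC]]]; first lia.
  by move/eqP: (oC _ _ xC (negC _ xD xv) (addrN x)); rewrite eq_sym eqNr gt_eqF.
rewrite (_ : _ + 2 * x = fsum C0 - - x + x); last by rewrite sumC0; lia.
have [sC0A _ _] := aC0.
apply: (mem_Sn_exchange aC0 nxC0) => //; first exact: fsubset_trans (fsubsetDl _ _) sC0A.
by rewrite fsetD11.
Qed.

Lemma card_Sn_fsetD1_opp_max n (A : {fset int}) (z v : int) :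
  Sn n (A `\ z `\ - z) = fset0 -> v \in sym_pos A ->
  (forall x, x \in sym_pos A -> x <= v) -> Sn n (A `\ - v) != fset0 ->
  (#|` Sn n (A `\ - v)| + #|` sym_pos A| <= #|` Sn n A|)%N.
Proof.
move=> SnA_eq0 vD v_max SnAv_neq0; have [vA v_gt0 nvA] := sym_posP _ _ vD.
have [_ /Sn_admissible [C aC ->] C_min'] := fset_argmax (fun x => - x) SnAv_neq0.
have C_min y : y \in Sn n (A `\ - v) -> fsum C <= y by move/C_min'; rewrite lerN2.
have [sC cC oC] := aC.
have aCA : admissible n A C by split=> //; apply: fsubset_trans sC (fsubsetDl _ _).
have meets := admissible_meets_pairs SnA_eq0 aCA.
have nvC : - v \notin C by apply/negP => /(fsubsetP sC); rewrite !inE eqxx.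
have vC : v \in C by case: (meets v vA) => //; rewrite (negbTE nvC).
have negC x : x \in sym_pos A -> x != v -> - x \in C.
  move=> /sym_posP [xA x_gt0 nxA] xv; case: (meets x xA) => // xC.
  apply/negPn/negP => nxC.
  suff : x <= 0 by rewrite leNgt x_gt0.
  apply: (admissible_min_opp_le0 aC C_min xC _ nxC).
  by rewrite !inE nxA andbT (inj_eq oppr_inj).
(* C meets every pair, so it holds v and every other -x; flipping v, then one
   -x, gives sums of S_n(A) below the minimum fsum C of S_n(A \ -v). *)
pose N := (fun x => fsum C - 2 * v + 2 * x) @` (0 |` (sym_pos A `\ v)).
have cN : #|` N| = #|` sym_pos A|.
  rewrite card_imfset /=; last by move=> a b /=; lia.
  have D0 : 0 \notin sym_pos A `\ v by apply/fsetD1P => [[_ /sym_posP [_]]]; rewrite ltxx.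
  by rewrite cardfsU1 D0 (cardfsD1 v (sym_pos A)) vD.
rewrite -cN; apply: leq_card_disjoint; first exact/SnS/fsubsetDl.
  apply/fsubsetP => _ /imfsetP [x /= xD ->].
  exact: mem_Sn_double_exchange.
apply: (@disjoint_beyond (-1)) => _ y /imfsetP [x /= /fset1UP hx ->] /C_min.
by case: hx => [-> | /fsetD1P [xv /v_max]]; lia.
Qed.

(* Twice n (K - n - c) + c (c + 1) / 2 + 1. *)
Definition lower_bound2 (n K c : nat) : int :=
  2 * n%:Z * (K%:Z - n%:Z - c%:Z) + c%:Z * (c%:Z + 1) + 2.

Definition Sn_bound (n : nat) (A : {fset int}) : Prop :=
  lower_bound2 n #|` A| #|` sym_pos A| <= 2 * #|` Sn n A|%:Z.

Lemma lower_bound2_antitone n K c c' :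
  (c' <= c <= n)%N -> lower_bound2 n K c <= lower_bound2 n K c'.
Proof.
case/andP => le_c'c le_cn; have [-> // | neq_c'c] := eqVneq c' c.
have : 0 <= (c%:Z - c'%:Z) * (2 * n%:Z - c%:Z - c'%:Z - 1) by apply: mulr_ge0; lia.
rewrite /lower_bound2; lia.
Qed.

Lemma lower_bound2_shift n K j c c' :
  (c' <= c <= n)%N -> lower_bound2 n (K + j) c <= lower_bound2 n K c' + 2 * n%:Z * j%:Z.
Proof.
move/(lower_bound2_antitone (K + j)) => le_c; apply: le_trans le_c _.
by rewrite /lower_bound2; lia.
Qed.

Lemma lower_bound2_drop n K c c' :
  (c' < c <= n)%N -> lower_bound2 n K.+1 c <= lower_bound2 n K c' + 2 * c%:Z.
Proof.
case: c => // m lt_c'm; have /(lower_bound2_antitone K) : (c' <= m <= n)%N by lia.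
by rewrite /lower_bound2; lia.
Qed.

Lemma Sn_bound_small n (A : {fset int}) :
  (#|` A| <= n)%N -> sym_pos A = fset0 -> Sn n A != fset0 -> Sn_bound n A.
Proof.
rewrite /Sn_bound /lower_bound2 -cardfs_gt0 => le_An ->; rewrite cardfs0 => ?.
have : 0 <= n%:Z * (n%:Z - #|` A|%:Z) by apply: mulr_ge0; lia.
lia.
Qed.

Section LowerBoundStep.
Variables (n : nat) (A : {fset int}).
Hypothesis IH : forall A' : {fset int}, (#|` A'| < #|` A|)%N ->
  Sn n A' != fset0 -> (#|` sym_pos A'| <= n)%N -> Sn_bound n A'.
Hypotheses (SnA_neq0 : Sn n A != fset0) (c_le_n : (#|` sym_pos A| <= n)%N).

Lemma Sn_bound_blocking_pair (z : int) : Sn n (A `\ z `\ - z) = fset0 -> Sn_bound n A.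
Proof.
move=> SnA_eq0; have [D_eq0 | D_neq0] := eqVneq (sym_pos A) fset0.
  have [_ /Sn_admissible [B aB _]] := fset0Pn _ SnA_neq0; have [sBA cB _] := aB.
  apply: Sn_bound_small => //; rewrite -cB; apply/fsubset_leq_card/fsubsetP => y yA.
  have [// | nyB] := admissible_meets_pairs SnA_eq0 aB yA.
  have nyA := fsubsetP sBA _ nyB.
  case: (ltrgtP y 0) => [y_lt0 | y_gt0 | y0]; last by move: nyB; rewrite y0 oppr0.
  - have : - y \in sym_pos A by apply/sym_posP; rewrite opprK oppr_gt0.
    by rewrite D_eq0 inE.
  - have : y \in sym_pos A by apply/sym_posP.
    by rewrite D_eq0 inE.
have [v vD v_max] := fset_argmax id D_neq0; have [vA v_gt0 nvA] := sym_posP _ _ vD.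
have SnAv_neq0 : Sn n (A `\ - v) != fset0.
  by apply: Sn_fsetD1_opp_neq0 => //; rewrite gt_eqF.
have gain := card_Sn_fsetD1_opp_max SnA_eq0 vD v_max SnAv_neq0.
have cA : #|` A| = (#|` A `\ - v|).+1 by rewrite (cardfsD1 (- v) A) nvA.
have sD : sym_pos (A `\ - v) `<=` sym_pos A `\ v.
  apply/fsubsetP => x /sym_posP [/fsetD1P [_ xA] x_gt0 /fsetD1P [nxv nxA]].
  by apply/fsetD1P; split; [apply: contraNneq nxv => -> | apply/sym_posP].
have cD : (#|` sym_pos (A `\ - v)|.+1 <= #|` sym_pos A|)%N.
  by have := fsubset_leq_card sD; rewrite (cardfsD1 v (sym_pos A)) vD.
have IHv : Sn_bound n (A `\ - v) by apply: IH; rewrite ?cA //; lia.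
have le_c : (#|` sym_pos (A `\ - v)| < #|` sym_pos A| <= n)%N by rewrite cD c_le_n.
move: IHv; rewrite /Sn_bound cA; have := lower_bound2_drop #|` A `\ - v| le_c.
lia.
Qed.

Lemma Sn_bound_extreme (e z : int) :
  z \in A -> - z \notin A `\ z -> (forall b, b \in A `\ z -> e * b < e * z) ->
  Sn_bound n A.
Proof.
move=> zA nzA z_max.
have [SnAz_eq0 | SnAz_neq0] := eqVneq (Sn n (A `\ z)) fset0.
  apply: (@Sn_bound_blocking_pair z); apply/eqP; rewrite -fsubset0 -SnAz_eq0.
  exact/SnS/fsubsetDl.
have gain := card_Sn_fsetD1_extreme zA nzA z_max SnAz_neq0.
have cA : #|` A| = (#|` A `\ z| + 1)%N by rewrite (cardfsD1 z A) zA addnC.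
have le_c : (#|` sym_pos (A `\ z)| <= #|` sym_pos A| <= n)%N.
  by rewrite c_le_n andbT; apply/fsubset_leq_card/sym_posS/fsubsetDl.
have IHz : Sn_bound n (A `\ z) by apply: IH => //; [rewrite cA addn1 | lia].
move: IHz; rewrite /Sn_bound cA; have := lower_bound2_shift #|` A `\ z| 1 le_c.
lia.
Qed.

Lemma Sn_bound_extreme_pair (w : int) :
  w \in A -> 0 < w -> - w \in A -> (forall b, b \in A `\ w `\ - w -> - w < b < w) ->
  Sn_bound n A.
Proof.
move=> wA w_gt0 nwA w_max.
have [SnA2_eq0 | SnA2_neq0] := eqVneq (Sn n (A `\ w `\ - w)) fset0.
  exact: Sn_bound_blocking_pair SnA2_eq0.
have gain := card_Sn_fsetD2_extreme wA nwA w_max SnA2_neq0.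
have cA : #|` A| = (#|` A `\ w `\ - w| + 2)%N.
  rewrite (cardfsD1 w A) wA (cardfsD1 (- w) (A `\ w)) !inE nwA andbT.
  by rewrite eqNr gt_eqF //= !add1n addn2.
have le_c : (#|` sym_pos (A `\ w `\ - w)| <= #|` sym_pos A| <= n)%N.
  rewrite c_le_n andbT; apply/fsubset_leq_card/sym_posS.
  exact: fsubset_trans (fsubsetDl _ _) (fsubsetDl _ _).
have IHw : Sn_bound n (A `\ w `\ - w) by apply: IH => //; [rewrite cA addn2 | lia].
move: IHw; rewrite /Sn_bound cA; have := lower_bound2_shift #|` A `\ w `\ - w| 2 le_c.
lia.
Qed.

End LowerBoundStep.

Lemma Sn_lower_bound n (A : {fset int}) :
  Sn n A != fset0 -> (#|` sym_pos A| <= n)%N -> Sn_bound n A.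
Proof.
have [k] := ubnP #|` A|; elim: k A => // k IHk A le_Ak SnA_neq0 c_le_n.
have IH A' : (#|` A'| < #|` A|)%N -> Sn n A' != fset0 ->
    (#|` sym_pos A'| <= n)%N -> Sn_bound n A'.
  by move=> lt_A'A; apply: IHk; apply: leq_trans lt_A'A _.
have [A_eq0 | A_neq0] := eqVneq A fset0.
  apply: Sn_bound_small => //; first by rewrite A_eq0 cardfs0.
  by apply/eqP; rewrite -fsubset0 -A_eq0; apply/fsubsetP => x /sym_posP [].
have [w wA w_max] := fset_argmax id A_neq0.
have [u uA u_min] := fset_argmax (fun x => - x) A_neq0.
have [nwA | nwA] := boolP (- w \in A `\ w); last first.
  apply: (Sn_bound_extreme IH SnA_neq0 c_le_n (e := 1) wA nwA) => b /fsetD1P [bw bA].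
  by have := w_max b bA; rewrite !mul1r lt_neqAle bw => ->.
have [nuA | nuA] := boolP (- u \in A `\ u); last first.
  apply: (Sn_bound_extreme IH SnA_neq0 c_le_n (e := -1) uA nuA) => b /fsetD1P [bu bA].
  by have := u_min b bA; rewrite !mulN1r ltrN2 lerN2 lt_neqAle eq_sym bu => ->.
have [nw_neq_w nwA'] := fsetD1P _ _ _ nwA; have [_ nuA'] := fsetD1P _ _ _ nuA.
have u_eq : u = - w by have := u_min _ nwA'; have := w_max _ nuA'; rewrite /=; lia.
have w_gt0 : 0 < w by have := w_max _ uA; rewrite u_eq /=; move/eqP: nw_neq_w; lia.
apply: (Sn_bound_extreme_pair IH SnA_neq0 c_le_n wA w_gt0 nwA') => b.
move=> /fsetD1P [b_neq_nw /fsetD1P [b_neq_w bA]].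
have := u_min _ bA; have := w_max _ bA; rewrite u_eq /= lerN2 => b_le_w nw_le_b.
by rewrite !lt_neqAle b_le_w nw_le_b b_neq_w eq_sym b_neq_nw.
Qed.

Lemma card_sym_pos_le_neg (A : {fset int}) :
  (#|` sym_pos A| <= #|` [fset a in A | (a < 0)%R]|)%N.
Proof.
have -> : #|` sym_pos A| = #|` (fun x => - x) @` sym_pos A|.
  by rewrite [RHS]card_imfset //; apply: oppr_inj.
apply: fsubset_leq_card.
by apply/fsubsetP => _ /imfsetP [x /= /sym_posP [_ x_gt0 nxA] ->]; rewrite !inE nxA oppr_lt0.
Qed.

Lemma card_sym_pos_le_pos (A : {fset int}) :
  (#|` sym_pos A| <= #|` [fset a in A | (0 < a)%R]|)%N.
Proof.
by apply/fsubset_leq_card/fsubsetP => x /sym_posP [xA x_gt0 _]; rewrite !inE xA.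
Qed.

Lemma card_sym_pos_extremal n k (A : {fset int}) :
  (2 < n)%N -> (2 * n - 1 <= k)%N -> #|` A| = k ->
  #|` Sn n A|%:Z = (k%:Z - 1) * n%:Z - 3 * ('C(n, 2))%:Z + 1 ->
  (n - 1 <= #|` sym_pos A|)%N.
Proof.
move=> n_gt2 k_ge cA cSn.
have bin2n : (2 * 'C(n, 2) = n * (n - 1))%N by rewrite mul_bin_left bin1 mulnC.
have SnA_neq0 : Sn n A != fset0 by rewrite -cardfs_gt0; nia.
rewrite leqNgt; apply/negP => c_lt.
have /(Sn_lower_bound SnA_neq0) : (#|` sym_pos A| <= n)%N by lia.
have : (#|` sym_pos A| <= n - 2 <= n)%N by lia.
move/(lower_bound2_antitone k); rewrite /Sn_bound /lower_bound2 cA cSn.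
nia.
Qed.

Theorem lemma3p1 (n k : nat) (A : {fset int}) :
  (2 < n)%N -> (2 * n - 1 <= k)%N -> #|` A| = k ->
  (#|` Sn n A|%:Z = (k%:Z - 1) * n%:Z - 3 * ('C(n, 2))%:Z + 1)%R ->
  (n - 1 <= #|` [fset a in A | (a < 0)%R]|)%N /\
  (n - 1 <= #|` [fset a in A | (0 < a)%R]|)%N.
Proof.
move=> n_gt2 k_ge cA cSn; have c_ge := card_sym_pos_extremal n_gt2 k_ge cA cSn.
by split; apply: leq_trans c_ge _; [apply: card_sym_pos_le_neg | apply: card_sym_pos_le_pos].
Qed.
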